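(* Let $G$ be a finite abelian group, $\Phi$ a normalized $3$-cocycle on $G$, and $V=\bigoplus_{i=1}^nV_i$ an object of ${}^{\mathbbm{k}G}_{\mathbbm{k}G}\mathcal{YD}^{\Phi}$ with each $V_i$ simple. Let $H=G_V$. If $\Phi|_H$ is not an abelian $3$-cocycle on $H$, then $n\ge3$ and at least three of the summands $V_i$ are not of diagonal type.
   Context: $\mathbbm{k}$ is algebraically closed of characteristic zero. For a finite abelian group $K$, a normalized 3-cocycle $\Phi$ and $g\in K$, $\widetilde{\Phi}_g(x,y)=\frac{\Phi(g,x,y)\Phi(x,y,g)}{\Phi(x,g,y)}$. The category ${}^{\mathbbm{k}K}_{\mathbbm{k}K}\mathcal{YD}^{\Phi}$ has objects the $K$-graded spaces $V=\bigoplus_gV_g$ with operators $e\triangleright-$ preserving each $V_g$, $1\triangleright v=v$, $e\triangleright(f\triangleright v)=\widetilde{\Phi}_g(e,f)(ef)\triangleright v$ for $v\in V_g$ (with tensor product of degree $gh$ and action $e\triangleright(X\otimes Y)=\widetilde{\Phi}_e(g,h)(e\triangleright X)\otimes(e\triangleright Y)$). A simple object $V$ is concentrated in a single degree $g_V$; the support group $G_V$ of $V=\bigoplus_iV_i$ ($V_i$ simple) is the subgroup generated by the $g_{V_i}$. An object is of diagonal type if it is a direct sum of $1$-dimensional objects. A 3-cocycle $\Psi$ on $K$ is abelian if every simple object of ${}^{\mathbbm{k}K}_{\mathbbm{k}K}\mathcal{YD}^{\Psi}$ is $1$-dimensional. *)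

From HB Require Import structures.
From mathcomp Require Import all_boot all_order all_algebra all_fingroup.
Unset Printing Implicit Defensive.
Import GRing.Theory.
Local Open Scope ring_scope.

Section YD.
Variables (F : fieldType) (gT : finGroupType).

Definition normalized3 (G : {group gT}) (Phi : gT -> gT -> gT -> F) :=
  forall a b : gT, a \in G -> b \in G -> Phi (1%g) a b = 1 /\ Phi a (1%g) b = 1 /\ Phi a b (1%g) = 1.

Definition cocycle3 (G : {group gT}) (Phi : gT -> gT -> gT -> F) :=
  (forall a b c, a \in G -> b \in G -> c \in G -> Phi a b c != 0) /\
  (forall a b c d, a \in G -> b \in G -> c \in G -> d \in G ->
     Phi b c d * Phi a (b * c)%g d * Phi a b c =
     Phi (a * b)%g c d * Phi a b (c * d)%g).

Definition phit (Phi : gT -> gT -> gT -> F) (g x y : gT) : F :=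
  Phi g x y * Phi x y g / Phi x g y.

(* A (finite-dimensional) graded space with operators: component of degree g
   is F^(ydim g) (row vectors), and e acts on it by v |-> v *m yact g e. *)
Record ydobj := YDObj {
  ydim : gT -> nat;
  yact : forall g : gT, gT -> 'M[F]_(ydim g)
}.


Definition ytotdim (V : ydobj) : nat := (\sum_(g : gT) ydim V g)%N.

Definition is_yd (G : {group gT}) (Phi : gT -> gT -> gT -> F) (V : ydobj) :=
  [/\ forall g, g \notin G -> ydim V g = 0%N,
      forall g, g \in G -> yact V g (1%g) = 1%:M &
      forall g e f, g \in G -> e \in G -> f \in G ->
        (* e |> (f |> v) = phit_g(e,f) (ef) |> v, with right action by matrices *)
        yact V g f *m yact V g e = phit Phi g e f *: yact V g (e * f)%g].

Definition yd_subobj (G : {group gT}) (V : ydobj)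
  (U : forall g : gT, 'M[F]_(ydim V g)) :=
  forall g e, e \in G -> (U g *m yact V g e <= U g)%MS.

Definition yd_simple (G : {group gT}) (V : ydobj) :=
  (0 < ytotdim V)%N /\
  forall U : forall g : gT, 'M[F]_(ydim V g), yd_subobj G V U ->
    (forall g, U g = 0) \/ (forall g, row_full (U g)).

(* Degree of a simple object (the unique degree where it is nonzero). *)
Definition ydeg (V : ydobj) : gT := odflt (1%g) [pick g | (0 < ydim V g)%N].

Definition supp_group (n : nat) (V : 'I_n -> ydobj) : {group gT} :=
  (<< [set ydeg (V i) | i : 'I_n] >>)%G.

(* Diagonal type: direct sum of one-dimensional subobjects, i.e. every
   homogeneous component has a basis of common eigenvectors. *)
Definition diagonal_type (G : {group gT}) (V : ydobj) :=
  forall g, g \in G -> exists P : 'M[F]_(ydim V g),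
    P \in unitmx /\ forall e, e \in G -> is_diag_mx (P *m yact V g e *m invmx P).

(* Psi is an abelian 3-cocycle on H: every simple object of kH-YD^Psi
   is one-dimensional. *)
Definition abelian_cocycle (H : {group gT}) (Psi : gT -> gT -> gT -> F) :=
  forall V : ydobj, is_yd H Psi V -> yd_simple H V -> ytotdim V = 1%N.

End YD.

Arguments normalized3 {F gT}.
Arguments cocycle3 {F gT}.
Arguments phit {F gT}.
Arguments ytotdim {F gT}.
Arguments is_yd {F gT}.
Arguments yd_subobj {F gT}.
Arguments yd_simple {F gT}.
Arguments ydeg {F gT}.
Arguments supp_group {F gT n}.
Arguments diagonal_type {F gT}.
Arguments abelian_cocycle {F gT}.

From HB Require Import structures.
From mathcomp Require Import all_boot all_order all_algebra all_fingroup.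
From mathcomp Require Import ring.

(* For g in G the factor phit_g is a 2-cocycle on the abelian group G, so its alternating form
   phit_comm Phi g x y = phit_g(x,y) / phit_g(y,x) is multiplicative in x; it is also invariant
   under cyclic permutations of (g, x, y), hence multiplicative in each argument, and trivial as
   soon as two arguments coincide.  On the component of degree g the operators of x and y commute
   iff phit_comm Phi g x y = 1.  Hence diagonal type forces the form to vanish at the degree of a
   simple object, while if it vanishes on H = G_V the operators of any simple object over H
   commute, are therefore scalar, and the object is one-dimensional.  So a non-abelian Phi|_H
   yields a nontrivial value of the form on H, and by multiplicativity one on three generators
   deg V_i, deg V_j, deg V_k; these are pairwise distinct and none of V_i, V_j, V_k is of
   diagonal type. *)

Set Implicit Arguments.
Unset Strict Implicit.
Unset Printing Implicit Defensive.

Import GRing.Theory.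
Local Open Scope ring_scope.

Arguments ydim {F gT}.
Arguments yact {F gT}.

Definition alt_form {F : fieldType} {T : Type} (c : T -> T -> F) (x y : T) : F :=
  c x y / c y x.

Section AlternatingForm.

Variables (F : fieldType) (gT : finGroupType) (G : {group gT}) (c : gT -> gT -> F).
Hypotheses (abG : abelian G) (c_neq0 : {in G &, forall x y, c x y != 0}).
Hypothesis c_cocycle : forall x y z, x \in G -> y \in G -> z \in G ->
  c x y * c (x * y)%g z = c y z * c x (y * z)%g.

Lemma alt_form_xx x : x \in G -> alt_form c x x = 1.
Proof. by move=> Gx; rewrite /alt_form divff ?c_neq0. Qed.

Lemma alt_formMl x y z : x \in G -> y \in G -> z \in G ->
  alt_form c (x * y)%g z = alt_form c x z * alt_form c y z.
Proof.
move=> Gx Gy Gz; have cGG := centsP abG.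
have cMl u v w : u \in G -> v \in G -> w \in G ->
    c (u * v)%g w = c v w * c u (v * w)%g / c u v.
  by move=> Gu Gv Gw; rewrite -c_cocycle //; field; rewrite c_neq0.
have cMr u v w : u \in G -> v \in G -> w \in G ->
    c u (v * w)%g = c u v * c (u * v)%g w / c v w.
  by move=> Gu Gv Gw; rewrite c_cocycle //; field; rewrite c_neq0.
rewrite /alt_form (cMl x y z) // (cMr z x y) // (cGG z Gz x Gx) (cMl x z y) //.
rewrite (cGG z Gz y Gy); field.
by rewrite !c_neq0 ?groupM.
Qed.

End AlternatingForm.

Definition phit_comm {F : fieldType} {gT : finGroupType}
  (Phi : gT -> gT -> gT -> F) (g : gT) : gT -> gT -> F :=
  alt_form (phit Phi g).

Section TwistedCommutator.

Variables (F : fieldType) (gT : finGroupType) (G : {group gT}).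
Variable Phi : gT -> gT -> gT -> F.
Hypotheses (abG : abelian G) (PhiC : cocycle3 G Phi).

Let Phi_neq0 := PhiC.1.

Lemma cocycle3_Ml a b c d : a \in G -> b \in G -> c \in G -> d \in G ->
  Phi (a * b)%g c d = Phi b c d * Phi a (b * c)%g d * Phi a b c / Phi a b (c * d)%g.
Proof. by move=> Ga Gb Gc Gd; rewrite PhiC.2 // mulfK ?Phi_neq0 ?groupM. Qed.

Lemma cocycle3_Mm a b c d : a \in G -> b \in G -> c \in G -> d \in G ->
  Phi a (b * c)%g d = Phi (a * b)%g c d * Phi a b (c * d)%g / (Phi b c d * Phi a b c).
Proof. by move=> Ga Gb Gc Gd; rewrite -PhiC.2 //; field; rewrite !Phi_neq0. Qed.

Lemma phit_neq0 g x y : g \in G -> x \in G -> y \in G -> phit Phi g x y != 0.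
Proof. by move=> Gg Gx Gy; rewrite /phit mulf_neq0 ?invr_neq0 ?mulf_neq0 ?Phi_neq0. Qed.

Lemma phit_cocycle g x y z : g \in G -> x \in G -> y \in G -> z \in G ->
  phit Phi g x y * phit Phi g (x * y)%g z = phit Phi g y z * phit Phi g x (y * z)%g.
Proof.
move=> Gg Gx Gy Gz; have cGG := centsP abG.
rewrite /phit (cocycle3_Mm Gg Gx Gy Gz) (cGG g Gg x Gx) (cocycle3_Ml Gx Gg Gy Gz).
rewrite (cocycle3_Ml Gx Gy Gg Gz) (cocycle3_Ml Gx Gy Gz Gg).
rewrite (cGG g Gg y Gy) (cGG g Gg z Gz).
by field; rewrite !Phi_neq0 ?groupM.
Qed.

Lemma phit_comm_neq0 g x y : g \in G -> x \in G -> y \in G -> phit_comm Phi g x y != 0.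
Proof. by move=> Gg Gx Gy; rewrite mulf_neq0 ?invr_neq0 ?phit_neq0. Qed.

Lemma phit_comm_cycle g x y : g \in G -> x \in G -> y \in G ->
  phit_comm Phi g x y = phit_comm Phi x y g.
Proof. by move=> Gg Gx Gy; rewrite /phit_comm /alt_form /phit; field; rewrite !Phi_neq0. Qed.

Lemma phit_comm_neq1_distinct g x y : g \in G -> x \in G -> y \in G ->
  phit_comm Phi g x y != 1 -> [/\ g != x, x != y & g != y].
Proof.
have comm_xx u v : u \in G -> v \in G -> phit_comm Phi u v v = 1.
  by move=> Gu Gv; apply: (alt_form_xx _ Gv) => a b Ga Gb; apply: phit_neq0.
move=> Gg Gx Gy comm_neq1; split; apply: contraNneq comm_neq1 => eq_uv.
- by rewrite -eq_uv phit_comm_cycle // phit_comm_cycle // comm_xx.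
- by rewrite eq_uv comm_xx.
- by rewrite -eq_uv phit_comm_cycle // comm_xx.
Qed.

Lemma phit_commMl g h x y : g \in G -> h \in G -> x \in G -> y \in G ->
  phit_comm Phi (g * h)%g x y = phit_comm Phi g x y * phit_comm Phi h x y.
Proof.
move=> Gg Gh Gx Gy.
have cycle2 u : u \in G -> phit_comm Phi u x y = phit_comm Phi y u x.
  by move=> Gu; rewrite phit_comm_cycle // phit_comm_cycle.
rewrite !cycle2 ?groupM //; apply: (alt_formMl abG) => // [a b Ga Gb|a b c Ga Gb Gc].
  exact: phit_neq0.
exact: phit_cocycle.
Qed.

Lemma phit_comm1g x y : x \in G -> y \in G -> phit_comm Phi 1%g x y = 1.
Proof.
move=> Gx Gy; apply: (mulIf (phit_comm_neq0 (group1 G) Gx Gy)).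
by rewrite mul1r -phit_commMl ?mulg1.
Qed.

Lemma phit_comm_gen_eq1 (S : {set gT}) x y : S \subset G -> x \in G -> y \in G ->
  {in S, forall s, phit_comm Phi s x y = 1} -> {in <<S>>%g, forall z, phit_comm Phi z x y = 1}.
Proof.
move=> sSG Gx Gy S1.
pose K := [set z in G | phit_comm Phi z x y == 1].
have gK : group_set K.
  apply/group_setP; split=> [|u v]; first by rewrite inE group1 phit_comm1g ?eqxx.
  rewrite !inE => /andP[Gu /eqP u1] /andP[Gv /eqP v1].
  by rewrite groupM // phit_commMl // u1 v1 mulr1 eqxx.
have sSK : <<S>>%g \subset K.
  rewrite -(gen_set_id gK) genS //; apply/subsetP => s Ss.
  by rewrite inE (subsetP sSG) // S1 ?eqxx.
by move=> z /(subsetP sSK); rewrite inE => /andP[_ /eqP].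
Qed.

Lemma phit_comm_gen_neq1 (S : {set gT}) g x y : S \subset G ->
  g \in <<S>>%g -> x \in <<S>>%g -> y \in <<S>>%g -> phit_comm Phi g x y != 1 ->
  exists s1 s2 s3, [/\ s1 \in S, s2 \in S, s3 \in S & phit_comm Phi s1 s2 s3 != 1].
Proof.
move=> sSG; have sSgG : <<S>>%g \subset G by rewrite gen_subG.
have step z u v : z \in <<S>>%g -> u \in G -> v \in G -> phit_comm Phi z u v != 1 ->
    exists2 s, s \in S & phit_comm Phi u v s != 1.
  move=> Sz Gu Gv comm_neq1.
  case: (pickP [pred s in S | phit_comm Phi s u v != 1]) => [s /andP[Ss]|none].
    by exists s; rewrite // -phit_comm_cycle // (subsetP sSG).
  case/eqP: comm_neq1; apply: (phit_comm_gen_eq1 sSG) => // s Ss.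
  by apply/eqP; have := none s; rewrite /= Ss => /negbFE.
have inG := subsetP sSgG; have SinG := subsetP sSG.
move=> Sg Sx Sy comm_neq1.
have [s1 Ss1 comm1] := step _ _ _ Sg (inG x Sx) (inG y Sy) comm_neq1.
have [s2 Ss2 comm2] := step _ _ _ Sx (inG y Sy) (SinG s1 Ss1) comm1.
have [s3 Ss3 comm3] := step _ _ _ Sy (SinG s1 Ss1) (SinG s2 Ss2) comm2.
by exists s1, s2, s3.
Qed.

End TwistedCommutator.

Lemma diag_conj_mxC (F : fieldType) (n : nat) (P A B : 'M[F]_n) : P \in unitmx ->
  is_diag_mx (P *m A *m invmx P) -> is_diag_mx (P *m B *m invmx P) -> comm_mx A B.
Proof.
move=> Pu /diag_mxP[a eA] /diag_mxP[b eB].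
have conjM M N : P *m (M *m N) *m invmx P = P *m M *m invmx P *m (P *m N *m invmx P).
  by rewrite !mulmxA mulmxKV.
have conjK : cancel (fun M => P *m M *m invmx P) (fun M => invmx P *m M *m P).
  by move=> M; rewrite !mulmxA mulmxKV // mulVmx // mul1mx.
by apply: (can_inj conjK); rewrite /= !conjM eA eB diag_mxC.
Qed.

Lemma submx_dim0 (F : fieldType) (m p n : nat) (A : 'M[F]_(m, n)) (B : 'M_(p, n)) :
  n = 0%N -> (A <= B)%MS.
Proof. by move=> n0; subst n; rewrite thinmx0 sub0mx. Qed.

Section YDObject.

Variables (F : fieldType) (gT : finGroupType) (G : {group gT}).
Variables (Phi : gT -> gT -> gT -> F) (V : ydobj F gT).
Hypotheses (PhiC : cocycle3 G Phi) (VYD : is_yd G Phi V).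

Lemma yact_neq0 g x : g \in G -> x \in G -> (0 < ydim V g)%N -> yact V g x != 0.
Proof.
move=> Gg Gx dim_gt0; have [_ yact1 yactM] := VYD.
apply: contra_neq (phit_neq0 PhiC Gg (groupVr Gx) Gx) => yact_x0.
have /matrixP/(_ (Ordinal dim_gt0) (Ordinal dim_gt0)) := yactM g x^-1%g x Gg (groupVr Gx) Gx.
by rewrite mulVg yact1 // yact_x0 mul0mx !mxE eqxx mulr1 => /esym.
Qed.

Lemma yact_commE g e f : abelian G -> g \in G -> e \in G -> f \in G -> (0 < ydim V g)%N ->
  comm_mxb (yact V g e) (yact V g f) = (phit_comm Phi g e f == 1).
Proof.
move=> abG Gg Ge Gf dim_gt0; have [_ _ yactM] := VYD.
rewrite /comm_mxb yactM // yactM // (centsP abG f Gf e Ge) -subr_eq0 -scalerBl.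
rewrite scalemx_eq0 (negbTE (yact_neq0 Gg (groupM Ge Gf) dim_gt0)) orbF subr_eq0 eq_sym.
rewrite /phit_comm /alt_form; apply/eqP/eqP => [->|/divr1_eq //].
exact/divff/(phit_neq0 PhiC).
Qed.

Lemma diagonal_type_phit_comm g e f : abelian G -> diagonal_type G V ->
  g \in G -> e \in G -> f \in G -> (0 < ydim V g)%N -> phit_comm Phi g e f = 1.
Proof.
move=> abG Vdiag Gg Ge Gf dim_gt0; apply/eqP; rewrite -yact_commE //.
have [P [Pu Pdiag]] := Vdiag g Gg.
by apply/eqP/(diag_conj_mxC Pu); apply: Pdiag.
Qed.

End YDObject.

Section SimpleObject.

Variables (F : fieldType) (gT : finGroupType) (G : {group gT}) (V : ydobj F gT).
Hypothesis VS : yd_simple G V.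

Local Notation d := (ydeg V).

Lemma ydeg_pos : (0 < ydim V d)%N.
Proof.
rewrite /ydeg; case: pickP => [//|dim0]; case: VS; rewrite /ytotdim big1 // => g _.
by apply/eqP; rewrite -leqn0 leqNgt dim0.
Qed.

Lemma ydim_eq0 g : g != d -> ydim V g = 0%N.
Proof.
move=> g_neq_d; pose U k : 'M[F]_(ydim V k) := if k == d then 1%:M else 0.
have U_sub : yd_subobj G V U.
  by move=> k e _; rewrite /U; case: ifP => _; rewrite ?submx1 ?mul0mx ?sub0mx.
have [/(_ d)|/(_ g)] := VS.2 U U_sub; rewrite /U ?eqxx ?(negbTE g_neq_d).
  move/matrixP/(_ (Ordinal ydeg_pos) (Ordinal ydeg_pos)).
  by rewrite !mxE eqxx => /eqP; rewrite oner_eq0.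
by rewrite /row_full mxrank0 => /eqP.
Qed.

Lemma ytotdim_simple : ytotdim V = ydim V d.
Proof. by rewrite /ytotdim (bigD1 d) //= big1 ?addn0 // => g /ydim_eq0. Qed.

Lemma ydeg_in Phi : is_yd G Phi V -> d \in G.
Proof. by case=> dim0 _ _; apply: contraLR ydeg_pos => /dim0 ->. Qed.

Lemma yd_simple_component (U : forall g, 'M[F]_(ydim V g)) :
  (forall e, e \in G -> (U d *m yact V d e <= U d)%MS) -> U d = 0 \/ row_full (U d).
Proof.
move=> U_stable; have U_sub : yd_subobj G V U.
  move=> g e Ge; have [->|g_neq_d] := eqVneq g d; first exact: U_stable.
  exact/submx_dim0/ydim_eq0.
by case: (VS.2 U U_sub) => [/(_ d)|/(_ d)]; [left | right].
Qed.

End SimpleObject.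

Section CommutingSimpleObject.

Variables (F : closedFieldType) (gT : finGroupType) (G : {group gT}) (V : ydobj F gT).
Hypothesis VS : yd_simple G V.

Local Notation d := (ydeg V).

Hypothesis yact_comm : {in G &, forall e f, comm_mxb (yact V d e) (yact V d f)}.

Lemma yact_scalar e : e \in G -> exists a, yact V d e = a%:M.
Proof.
move=> Ge; have [a] : exists a, root (char_poly (yact V d e)) a.
  by apply/closed_rootP; rewrite size_char_poly eqSS -lt0n (ydeg_pos VS).
rewrite -eigenvalue_root_char => /eigenvalueP[v v_eigen v_neq0]; exists a.
pose U k : 'M[F]_(ydim V k) := eigenspace (yact V k e) a.
have U_stable f : f \in G -> (U d *m yact V d f <= U d)%MS.
  move=> Gf; apply/eigenspaceP; rewrite -mulmxA -(eqP (yact_comm Ge Gf)) mulmxA.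
  by have /eigenspaceP -> := submx_refl (U d); rewrite -scalemxAl.
case: (yd_simple_component VS U_stable) => [U0|].
  by case/negP: v_neq0; rewrite -submx0 -U0; apply/eigenspaceP.
by rewrite -sub1mx => /eigenspaceP; rewrite mul1mx scalemx1.
Qed.

Lemma ytotdim_eq1 : ytotdim V = 1%N.
Proof.
pose U k : 'M[F]_(ydim V k) := pid_mx 1.
have rankU : \rank (U d) = 1%N by rewrite rank_pid_mx ?(ydeg_pos VS).
have U_stable e : e \in G -> (U d *m yact V d e <= U d)%MS.
  by move=> Ge; have [a ->] := yact_scalar Ge; rewrite mul_mx_scalar scalemx_sub.
case: (yd_simple_component VS U_stable) => [U0|].
  by move: rankU; rewrite U0 mxrank0.
by rewrite (ytotdim_simple VS) /row_full rankU => /eqP.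
Qed.

End CommutingSimpleObject.

Lemma not_abelian_cocycle_phit_comm (F : closedFieldType) (gT : finGroupType)
    (H : {group gT}) (Phi : gT -> gT -> gT -> F) :
  abelian H -> cocycle3 H Phi -> ~ abelian_cocycle H Phi ->
  exists g e f, [/\ g \in H, e \in H, f \in H & phit_comm Phi g e f != 1].
Proof.
move=> abH PhiC not_abelian.
pose nontrivial (t : gT * gT * gT) :=
  [&& t.1.1 \in H, t.1.2 \in H, t.2 \in H & phit_comm Phi t.1.1 t.1.2 t.2 != 1].
case: (pickP nontrivial) => [[[g e] f] /and4P[Hg He Hf comm_neq1]|trivial].
  by exists g, e, f.
case: not_abelian => W WYD WS; apply: (ytotdim_eq1 WS) => e f He Hf.
rewrite (yact_commE PhiC WYD) ?(ydeg_in WS WYD) ?(ydeg_pos WS) //.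
by have := trivial (ydeg W, e, f); rewrite /nontrivial /= (ydeg_in WS WYD) He Hf => /negbFE.
Qed.

Lemma cocycle3S (F : fieldType) (gT : finGroupType) (H G : {group gT})
    (Phi : gT -> gT -> gT -> F) :
  H \subset G -> cocycle3 G Phi -> cocycle3 H Phi.
Proof.
move=> /subsetP sHG [Phi_neq0 Phi_cocycle].
by split=> [a b c Ha Hb Hc | a b c d Ha Hb Hc Hd]; [apply: Phi_neq0 | apply: Phi_cocycle];
  apply: sHG.
Qed.

Theorem proposition4p7 (F : closedFieldType) (gT : finGroupType)
  (G : {group gT}) (Phi : gT -> gT -> gT -> F)
  (n : nat) (V : 'I_n -> ydobj F gT) :
  [pchar F] =i pred0 ->
  abelian G ->
  cocycle3 G Phi -> normalized3 G Phi ->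
  (forall i, is_yd G Phi (V i) /\ yd_simple G (V i)) ->
  ~ abelian_cocycle (supp_group V) Phi ->
  (3 <= n)%N /\
  exists i j k : 'I_n, [/\ i != j, j != k & i != k] /\
    [/\ ~ diagonal_type G (V i), ~ diagonal_type G (V j) & ~ diagonal_type G (V k)].
Proof.
move=> _ abG PhiC _ VYD not_abelian.
have VinG i : ydeg (V i) \in G by have [YDi Si] := VYD i; exact: (ydeg_in Si YDi).
have nondiag i x y : x \in G -> y \in G ->
    phit_comm Phi (ydeg (V i)) x y != 1 -> ~ diagonal_type G (V i).
  move=> Gx Gy /eqP comm_neq1 Vdiag; have [YDi Si] := VYD i; apply: comm_neq1.
  exact: (diagonal_type_phit_comm PhiC YDi abG Vdiag (VinG i) Gx Gy (ydeg_pos Si)).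
have sSG : [set ydeg (V i) | i : 'I_n] \subset G by apply/subsetP=> _ /imsetP[i _ ->].
have sHG : supp_group V \subset G by rewrite gen_subG.
have [g [e [f [Hg He Hf]]]] :=
  not_abelian_cocycle_phit_comm (abelianS sHG abG) (cocycle3S sHG PhiC) not_abelian.
case/(phit_comm_gen_neq1 abG PhiC sSG Hg He Hf) => s1 [s2 [s3 []]].
move=> /imsetP[i _ ->] /imsetP[j _ ->] /imsetP[k _ ->] comm_ijk.
have [neq_ij neq_jk neq_ik] := phit_comm_neq1_distinct PhiC (VinG i) (VinG j) (VinG k) comm_ijk.
have ij : i != j by apply: contraNneq neq_ij => ->.
have jk : j != k by apply: contraNneq neq_jk => ->.
have ik : i != k by apply: contraNneq neq_ik => ->.
have /card_uniqP/= card_ijk : uniq [:: i; j; k] by rewrite /= !inE negb_or ij ik jk.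
split; first by rewrite -(card_ord n) -card_ijk max_card.
exists i, j, k; split=> //; split; first exact: (nondiag _ _ _ (VinG j) (VinG k) comm_ijk).
  by apply: (nondiag _ _ _ (VinG k) (VinG i)); rewrite -(phit_comm_cycle PhiC).
by apply: (nondiag _ _ _ (VinG i) (VinG j)); rewrite (phit_comm_cycle PhiC).
Qed.
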